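(* Let $(\gamma_i)_{i\in\omega}$ be modal formulas such that $\gamma_{i_2}\in\mathsf{K}+\gamma_{i_1}$ whenever $i_2<i_1$. Suppose that for every $l$ there is $n$ such that for every $k$ there is an inverse system $(\mathfrak{F}_i)_{i\in\omega}$ of finite Kripke frames with: (L1) $\mathfrak{F}_i\models\gamma_k$ for all $i$; (L2) $\varprojlim\mathfrak{F}_i\models\gamma_l$; (L3) $\varprojlim\mathfrak{F}_i\not\models\gamma_n$. Then for every set $\Sigma$ of modal formulas with $\mathsf{K}+\Sigma=\mathsf{K}+\{\gamma_n\mid n\in\omega\}$, infinitely many formulas of $\Sigma$ are not canonical.
   Context: $\mathsf{K}+\Sigma$ is the least normal modal logic containing $\Sigma$. A modal formula $\phi$ is canonical if it is valid in the canonical Kripke frame of the logic $\mathsf{K}+\phi$. An inverse system of Kripke frames indexed by $(\omega,\le)$ consists of frames $\mathfrak{F}_i=(W_i,(R_{i,\lambda}))$ and frame homomorphisms (bounded morphisms / p-morphisms) $f_{ij}:\mathfrak{F}_i\to\mathfrak{F}_j$ for $i\ge j$ with $f_{ii}=\mathrm{id}$ and $f_{jk}\circ f_{ij}=f_{ik}$ for $k\le j\le i$. Its inverse limit $\varprojlim\mathfrak{F}_i$ has carrier $\{x\in\prod_i W_i: f_{ij}(x_i)=x_j \text{ for all } i\ge j\}$ and $xR_\lambda y$ iff $x_iR_{i,\lambda}y_i$ for all $i$. *)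

From Stdlib Require Import List Arith.
Import ListNotations.
Set Implicit Arguments.

Section Modal.
Variable Lam : Type.

Inductive form : Type :=
| Var : nat -> form
| Bot : form
| Imp : form -> form -> form
| Box : Lam -> form -> form.

Definition Neg (a : form) : form := Imp a Bot.

Fixpoint subst (s : nat -> form) (a : form) : form :=
  match a with
  | Var n => s n
  | Bot => Bot
  | Imp a b => Imp (subst s a) (subst s b)
  | Box l a => Box l (subst s a)
  end.

(** Classical tautologies: true under every boolean assignment to the
    propositional atoms, where boxed formulas are treated as atoms. *)
Fixpoint beval (v : form -> bool) (a : form) : bool :=
  match a with
  | Var n => v (Var n)
  | Bot => false
  | Imp a b => implb (beval v a) (beval v b)
  | Box l a => v (Box l a)
  end.

Definition tautology (a : form) : Prop := forall v, beval v a = true.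

Inductive KPlus (Sigma : form -> Prop) : form -> Prop :=
| kp_taut a : tautology a -> KPlus Sigma a
| kp_K l a b : KPlus Sigma (Imp (Box l (Imp a b)) (Imp (Box l a) (Box l b)))
| kp_ax a : Sigma a -> KPlus Sigma a
| kp_mp a b : KPlus Sigma (Imp a b) -> KPlus Sigma a -> KPlus Sigma b
| kp_nec l a : KPlus Sigma a -> KPlus Sigma (Box l a)
| kp_subst s a : KPlus Sigma a -> KPlus Sigma (subst s a).

Record frame : Type := Frame {
  W : Type;
  Rel : Lam -> W -> W -> Prop
}.

Fixpoint forces (F : frame) (V : nat -> W F -> Prop) (w : W F) (a : form) : Prop :=
  match a with
  | Var n => V n w
  | Bot => False
  | Imp a b => forces F V w a -> forces F V w b
  | Box l a => forall u, Rel F l w u -> forces F V u a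
  end.

Definition valid (F : frame) (a : form) : Prop :=
  forall (V : nat -> W F -> Prop) (w : W F), forces F V w a.

Definition finite_frame (F : frame) : Prop :=
  exists l : list (W F), forall w, In w l.

Fixpoint impchain (l : list form) (c : form) : form :=
  match l with
  | [] => c
  | a :: l' => Imp a (impchain l' c)
  end.

Definition consistent (L : form -> Prop) (G : form -> Prop) : Prop :=
  ~ exists l : list form, (forall a, In a l -> G a) /\ L (impchain l Bot).

Definition maximal_consistent (L : form -> Prop) (G : form -> Prop) : Prop :=
  consistent L G /\
  forall D : form -> Prop, consistent L D -> (forall a, G a -> D a) -> (forall a, D a -> G a).

Definition canonical_frame (L : form -> Prop) : frame :=
  {| W := { G : form -> Prop | maximal_consistent L G };
     Rel := fun l G D => forall a, proj1_sig G (Box l a) -> proj1_sig D a |}.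

Definition canonical (phi : form) : Prop :=
  valid (canonical_frame (KPlus (fun a => a = phi))) phi.

Definition bounded_morphism (F G : frame) (h : W F -> W G) : Prop :=
  (forall l x y, Rel F l x y -> Rel G l (h x) (h y)) /\
  (forall l x y', Rel G l (h x) y' -> exists y, Rel F l x y /\ h y = y').

(** Inverse systems of frames indexed by (omega, <=): the maps f i j are only
    required to be meaningful for j <= i. *)
Definition inverse_system (F : nat -> frame) (f : forall i j, W (F i) -> W (F j)) : Prop :=
  (forall i j, j <= i -> bounded_morphism (F i) (F j) (f i j)) /\
  (forall i x, f i i x = x) /\
  (forall i j k, k <= j -> j <= i -> forall x, f j k (f i j x) = f i k x).

Definition inverse_limit (F : nat -> frame) (f : forall i j, W (F i) -> W (F j)) : frame :=
  {| W := { x : forall i, W (F i) | forall i j, j <= i -> f i j (x i) = x j };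
     Rel := fun l x y => forall i, Rel (F i) l (proj1_sig x i) (proj1_sig y i) |}.

Definition infinite_set (P : form -> Prop) : Prop :=
  ~ exists l : list form, forall a, P a -> In a l.

End Modal.

From Stdlib Require Import List Arith Lia Cantor.
From Stdlib Require Import Classical ClassicalEpsilon FunctionalExtensionality ProofIrrelevance PropExtensionality.
Import ListNotations.
Set Implicit Arguments.

(* A canonical formula [sigma] valid in finite frames [F i] is valid in their inverse
   limit: under a valuation naming every point of every stage, the map sending a thread to
   its theory is an injective bounded morphism from the limit into the canonical frame of
   K + sigma.  Its back condition rests on two facts: the projections of the limit are
   bounded morphisms (by dependent choice), and the truth of any formula at a thread is
   decided at a finite stage.
   If only finitely many formulas of Sigma were non-canonical, they would all follow from
   a single [gamma m]; let [n] be given by the hypothesis for [l = m].  By induction on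
   derivations, every formula of K + Sigma then holds, for some [k], in all inverse limits
   of finite frames validating [gamma k] whose limit validates [gamma m]; for [gamma n]
   this contradicts (L3). *)

Section Semantics.
Variable Lam : Type.
Implicit Types (F G : frame Lam) (a b c : form Lam) (S : form Lam -> Prop).

Lemma forces_subst F V s a w :
  forces F V w (subst s a) <-> forces F (fun n y => forces F V y (s n)) w a.
Proof.
  revert w; induction a as [n| |a1 IH1 a2 IH2|l a IH]; intro w; simpl; try tauto.
  - rewrite IH1, IH2; tauto.
  - split; intros H u Hu; apply IH, H, Hu.
Qed.

Lemma tautology_forces F V w a : tautology a -> forces F V w a.
Proof.
  set (v := fun c => if excluded_middle_informative (forces F V w c) then true else false).
  assert (Hv : forall c, beval v c = true <-> forces F V w c).
  { induction c as [n| |c1 IH1 c2 IH2|l c]; simpl.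
    3: rewrite <- IH1, <- IH2; destruct (beval v c1), (beval v c2); simpl; intuition congruence.
    all: unfold v; try destruct excluded_middle_informative; intuition congruence. }
  intro Ha; apply Hv, Ha.
Qed.

Lemma valid_KPlus F S : (forall b, S b -> valid F b) -> forall a, KPlus S a -> valid F a.
Proof.
  intros HS a H; induction H; intros V w; simpl.
  - now apply tautology_forces.
  - intros H1 H2 u Hu; apply H1; auto.
  - now apply HS.
  - apply (IHKPlus1 V w), IHKPlus2.
  - intros u _; apply IHKPlus.
  - apply forces_subst, IHKPlus.
Qed.

Lemma KPlus_trans S1 S2 : (forall b, S1 b -> KPlus S2 b) -> forall a, KPlus S1 a -> KPlus S2 a.
Proof.
  intros H a Ha; induction Ha.
  - now apply kp_taut.
  - apply kp_K.
  - auto.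
  - eapply kp_mp; eauto.
  - now apply kp_nec.
  - now apply kp_subst.
Qed.

Lemma beval_impchain v l c :
  beval v (impchain l c) = true <-> ((forall a, In a l -> beval v a = true) -> beval v c = true).
Proof.
  induction l as [|a l IH]; simpl.
  - firstorder.
  - destruct (beval v a) eqn:E; simpl.
    + rewrite IH; firstorder congruence.
    + split; [|reflexivity]. intros _ H; exfalso.
      enough (beval v a = true) by congruence. exact (H a (or_introl eq_refl)).
Qed.

Lemma forces_impchain F V w l c :
  forces F V w (impchain l c) <-> ((forall a, In a l -> forces F V w a) -> forces F V w c).
Proof.
  induction l as [|a l IH]; simpl.
  - firstorder.
  - rewrite IH; firstorder congruence.
Qed.

Fixpoint occurs (n : nat) (a : form Lam) : Prop :=
  match a with
  | Var _ m => m = n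
  | Bot _ => False
  | Imp a b => occurs n a \/ occurs n b
  | Box _ a => occurs n a
  end.

Lemma forces_bounded_morphism F G h V V' a :
  bounded_morphism F G h ->
  (forall n, occurs n a -> forall x, V n x <-> V' n (h x)) ->
  forall x, forces F V x a <-> forces G V' (h x) a.
Proof.
  intros [Hforth Hback]; induction a as [n| |a1 IH1 a2 IH2|l a IH]; intros Hv x; simpl.
  - now apply Hv.
  - tauto.
  - rewrite (IH1 (fun n o => Hv n (or_introl o))), (IH2 (fun n o => Hv n (or_intror o))); tauto.
  - split.
    + intros H u Hu. destruct (Hback _ _ _ Hu) as [y [Hy <-]]. apply IH; auto.
    + intros H y Hy. apply IH; auto.
Qed.

Lemma valid_injective_bounded_morphism F G h a :
  bounded_morphism F G h -> (forall x y, h x = h y -> x = y) -> valid G a -> valid F a.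
Proof.
  intros Hh Hinj Ha V x.
  set (V' := fun n u => exists y, h y = u /\ V n y).
  refine (proj2 (@forces_bounded_morphism F G h V V' a Hh _ x) (Ha V' (h x))).
  intros n _ y; split.
  - now exists y.
  - intros [y' [E Hy']]. now rewrite <- (Hinj _ _ E).
Qed.

Definition bigor (l : list (form Lam)) : form Lam :=
  fold_right (fun a b => Imp (Neg a) b) (Bot Lam) l.

Lemma forces_bigor F V w l a : In a l -> forces F V w a -> forces F V w (bigor l).
Proof.
  induction l as [|c l IH]; simpl; [tauto|].
  intros [<-|Ha] Hw Hn; [contradiction|auto].
Qed.

End Semantics.

Section InverseLimit.
Variable Lam : Type.
Variable F : nat -> frame Lam.
Variable f : forall i j, W (F i) -> W (F j).
Hypothesis Hsys : inverse_system F f.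
Local Notation X := (inverse_limit F f).

Definition lim_proj i (x : W X) : W (F i) := proj1_sig x i.

Lemma lim_proj_thread (x : W X) i j : j <= i -> f i j (lim_proj i x) = lim_proj j x.
Proof. apply (proj2_sig x). Qed.

Lemma system_bounded_morphism i j : j <= i -> bounded_morphism (F i) (F j) (f i j).
Proof. apply Hsys. Qed.

Lemma system_id i x : f i i x = x.
Proof. apply Hsys. Qed.

Lemma system_comp i j k x : k <= j -> j <= i -> f j k (f i j x) = f i k x.
Proof. intros; now apply Hsys. Qed.

(* The back condition for [lim_proj i]: a successor [w] of [x_i] is lifted, by dependent
   choice, to a thread of successors of [x_j] for [j >= i] lying over [w]. *)
Section ProjBack.
Variables (l : Lam) (x : W X) (i : nat) (w : W (F i)).
Hypothesis Hw : Rel (F i) l (lim_proj i x) w.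

Definition succ_over j := {v : W (F j) | Rel (F j) l (lim_proj j x) v}.

Definition lift_succ j (v : succ_over j) :
  {v' : succ_over (S j) | f (S j) j (proj1_sig v') = proj1_sig v}.
Proof.
  apply constructive_indefinite_description.
  destruct v as [v Hv].
  destruct (proj2 (system_bounded_morphism (Nat.le_succ_diag_r j)) l (lim_proj (S j) x) v)
    as [v' [Hv' E]].
  - now rewrite lim_proj_thread by lia.
  - now exists (exist _ v' Hv').
Defined.

Fixpoint succ_thread (t : nat) : succ_over (t + i) :=
  match t with
  | 0 => exist _ w Hw
  | S t' => proj1_sig (lift_succ (succ_thread t'))
  end.

Lemma succ_thread_down d t :
  f (d + t + i) (t + i) (proj1_sig (succ_thread (d + t))) = proj1_sig (succ_thread t).
Proof.
  induction d as [|d IH]; [apply system_id|].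
  rewrite <- (system_comp (i := S (d + t + i)) (j := d + t + i)) by lia.
  change (f (d + t + i) (t + i)
            (f (S (d + t + i)) (d + t + i)
               (proj1_sig (proj1_sig (lift_succ (succ_thread (d + t))))))
          = proj1_sig (succ_thread t)).
  now rewrite (proj2_sig (lift_succ _)).
Qed.

Definition lifted_point j : W (F j) := f (j + i) j (proj1_sig (succ_thread j)).

Lemma lifted_point_thread j k : k <= j -> f j k (lifted_point j) = lifted_point k.
Proof.
  intro Hkj; unfold lifted_point.
  destruct (Nat.le_exists_sub k j Hkj) as [d [-> _]].
  rewrite system_comp, <- (system_comp (i := d + k + i) (j := k + i) (k := k)) by lia.
  now rewrite succ_thread_down.
Qed.

Definition lifted : W X := exist _ lifted_point lifted_point_thread.

Lemma lifted_succ : Rel X l x lifted.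
Proof.
  intro j; simpl; unfold lifted_point.
  change (proj1_sig x j) with (lim_proj j x).
  rewrite <- (lim_proj_thread x (i := j + i)) by lia.
  apply (proj1 (system_bounded_morphism (Nat.le_add_r j i))), (proj2_sig (succ_thread j)).
Qed.

Lemma lifted_proj : lim_proj i lifted = w.
Proof.
  unfold lim_proj, lifted; simpl; unfold lifted_point.
  rewrite <- (system_comp (i := i + i) (j := 0 + i) (k := i)) by lia.
  pose proof (succ_thread_down i 0) as E; rewrite Nat.add_0_r in E.
  now rewrite E, system_id.
Qed.

End ProjBack.

Lemma lim_proj_bounded_morphism i : bounded_morphism X (F i) (lim_proj i).
Proof.
  split.
  - intros l x y H; apply H.
  - intros l x w Hw. exists (lifted _ _ _ _ Hw). split; [apply lifted_succ|apply lifted_proj].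
Qed.

Definition definable_at i (P : W X -> Prop) : Prop :=
  exists Q : W (F i) -> Prop, forall x, P x <-> Q (lim_proj i x).

Definition definable_valuation (V : nat -> W X -> Prop) : Prop :=
  forall n, exists i, definable_at i (V n).

Lemma definable_at_mono i j P : i <= j -> definable_at i P -> definable_at j P.
Proof.
  intros Hij [Q HQ]. exists (fun v => Q (f j i v)).
  intro x; now rewrite lim_proj_thread.
Qed.

Lemma forces_definable V : definable_valuation V ->
  forall a, exists i, definable_at i (fun x => forces X V x a).
Proof.
  intros HV; induction a as [n| |a1 [i1 H1] a2 [i2 H2]|l a [i [Q HQ]]].
  - apply HV.
  - exists 0, (fun _ => False); simpl; tauto.
  - apply (definable_at_mono (j := max i1 i2)) in H1, H2; try lia.
    destruct H1 as [Q1 H1], H2 as [Q2 H2].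
    exists (max i1 i2), (fun v => Q1 v -> Q2 v).
    intro x; simpl; now rewrite H1, H2.
  - exists i, (fun v => forall v', Rel (F i) l v v' -> Q v').
    intro x; simpl; split.
    + intros H v' Hv'.
      destruct (proj2 (lim_proj_bounded_morphism i) l x v' Hv') as [y [Hy <-]].
      apply HQ, H, Hy.
    + intros H y Hy. apply HQ, H, Hy.
Qed.

Lemma occurs_definable V : definable_valuation V ->
  forall a : form Lam, exists i, forall n, occurs n a -> definable_at i (V n).
Proof.
  intros HV; induction a as [n| |a1 [i1 H1] a2 [i2 H2]|l a IH].
  - destruct (HV n) as [i Hi]. exists i. intros m Hm; simpl in Hm; now subst.
  - exists 0; intros n [].
  - exists (max i1 i2). intros n [Ho|Ho].
    + apply (definable_at_mono (i := i1)); auto; lia.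
    + apply (definable_at_mono (i := i2)); auto; lia.
  - exact IH.
Qed.

(* Truth of the axioms is transported from a single finite stage along [lim_proj i], which
   is possible because a formula has finitely many variables. *)
Lemma definable_forces_KPlus S : (forall b, S b -> forall i, valid (F i) b) ->
  forall a, KPlus S a -> forall V, definable_valuation V -> forall x, forces X V x a.
Proof.
  intros HS a H; induction H; intros V HV x.
  - now apply tautology_forces.
  - simpl; intros H1 H2 u Hu; apply H1; auto.
  - destruct (occurs_definable HV a) as [i Hi].
    set (Vi := fun n v => exists y, lim_proj i y = v /\ V n y).
    refine (proj2 (@forces_bounded_morphism _ X (F i) (lim_proj i) V Vi a
                     (lim_proj_bounded_morphism i) _ x) (HS a H i Vi (lim_proj i x))).
    intros n Ho y; split.
    + now exists y.
    + intros [y' [E Hy']]. destruct (Hi n Ho) as [Q HQ].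
      now rewrite HQ, <- E, <- HQ.
  - apply (IHKPlus1 V HV x), IHKPlus2, HV.
  - simpl; intros u _; now apply IHKPlus.
  - apply forces_subst, IHKPlus.
    intro n; apply forces_definable, HV.
Qed.

End InverseLimit.

Lemma list_drop_elem (A : Type) (P : A -> Prop) (a : A) l :
  (forall c, In c l -> P c \/ c = a) ->
  exists l', (forall c, In c l' -> P c) /\ forall c, In c l -> In c l' \/ c = a.
Proof.
  induction l as [|c l IH]; intros H.
  - exists []; split; intros ? [].
  - destruct IH as [l' [H1 H2]]; [intros; apply H; now right|].
    destruct (H c (or_introl eq_refl)) as [Pc| ->].
    + exists (c :: l'); split.
      * intros d [<-|Hd]; auto.
      * intros d [<-|Hd]; [now left; left|]. destruct (H2 d Hd); auto with datatypes.
    + exists l'; split; auto. intros d [<-|Hd]; auto.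
Qed.

Section MaximalConsistent.
Variable Lam : Type.
Variable S0 : form Lam -> Prop.
Variable D : form Lam -> Prop.
Hypothesis HD : maximal_consistent (KPlus S0) D.

Lemma mcs_refutes (a : form Lam) : ~ D a ->
  exists l, (forall c, In c l -> D c) /\ KPlus S0 (impchain l (Neg a)).
Proof.
  intros Ha.
  assert (Hinc : ~ consistent (KPlus S0) (fun c => D c \/ c = a))
    by (intro Hc; apply Ha, (proj2 HD _ Hc); auto).
  apply NNPP in Hinc; destruct Hinc as [l [Hl HL]].
  destruct (@list_drop_elem _ D a l Hl) as [l' [H1 H2]].
  exists l'; split; auto.
  apply kp_mp with (impchain l (Bot Lam)); auto.
  apply kp_taut; intro v; simpl.
  destruct (beval v (impchain l (Bot Lam))) eqn:Hc; [|reflexivity]; simpl.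
  rewrite beval_impchain in Hc |- *. intro Hl'; simpl.
  destruct (beval v a) eqn:Ea; [|reflexivity].
  apply Hc; intros c Hin. destruct (H2 c Hin) as [Hc'|<-]; auto.
Qed.

Lemma mcs_closed l (b : form Lam) :
  (forall c, In c l -> D c) -> KPlus S0 (impchain l b) -> D b.
Proof.
  intros Hl HL. apply NNPP; intro Hb.
  destruct (mcs_refutes Hb) as [l2 [Hl2 HL2]].
  apply (proj1 HD). exists (l ++ l2); split.
  - intros c Hc; apply in_app_or in Hc; destruct Hc; auto.
  - apply kp_mp with (impchain l2 (Neg b)); auto.
    apply kp_mp with (impchain l b); auto.
    apply kp_taut; intro v; simpl.
    destruct (beval v (impchain l b)) eqn:H1; [|reflexivity]; simpl.
    destruct (beval v (impchain l2 (Neg b))) eqn:H2; [|reflexivity]; simpl.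
    rewrite beval_impchain in H1, H2 |- *. intro Hall.
    assert (E1 : beval v b = true) by (apply H1; intros; apply Hall, in_or_app; auto).
    assert (E2 : beval v (Neg b) = true) by (apply H2; intros; apply Hall, in_or_app; auto).
    simpl in E2; now rewrite E1 in E2.
Qed.

Lemma mcs_not_bot : ~ D (Bot Lam).
Proof.
  intro Hb; apply (proj1 HD). exists [Bot Lam]; split.
  - intros c [<-|[]]; exact Hb.
  - apply kp_taut; intro v; reflexivity.
Qed.

Lemma mcs_mp (a b : form Lam) : D (Imp a b) -> D a -> D b.
Proof.
  intros Hab Ha; apply (@mcs_closed [Imp a b; a]).
  - intros c [<-|[<-|[]]]; assumption.
  - apply kp_taut; intro v; simpl.
    destruct (beval v a), (beval v b); reflexivity.
Qed.

Lemma mcs_neg (a : form Lam) : ~ D a -> D (Neg a).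
Proof.
  intro Ha; destruct (mcs_refutes Ha) as [l [Hl HL]]; exact (mcs_closed _ _ Hl HL).
Qed.

Lemma mcs_bigor l : D (bigor l) -> exists c, In c l /\ D c.
Proof.
  induction l as [|a l IH]; simpl; intro H.
  - now apply mcs_not_bot in H.
  - destruct (classic (D a)) as [Ha|Ha]; [exists a; now split; [left|]|].
    destruct (IH (mcs_mp H (mcs_neg Ha))) as [c [Hc Dc]]; eauto.
Qed.

End MaximalConsistent.

Section CanonicalEmbedding.
Variable Lam : Type.
Variable F : nat -> frame Lam.
Variable f : forall i j, W (F i) -> W (F j).
Hypothesis Hsys : inverse_system F f.
Hypothesis Hfin : forall i, finite_frame (F i).
Variable sigma : form Lam.
Hypothesis Hsigma : forall i, valid (F i) sigma.
Local Notation X := (inverse_limit F f).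
Local Notation L := (KPlus (fun a => a = sigma)).

Definition enum i : list (W (F i)) := proj1_sig (constructive_indefinite_description _ (Hfin i)).

Lemma in_enum i w : In w (enum i).
Proof. exact (proj2_sig (constructive_indefinite_description _ (Hfin i)) w). Qed.

Definition code i (w : W (F i)) : nat :=
  proj1_sig (constructive_indefinite_description _ (In_nth_error _ _ (in_enum i w))).

Lemma code_spec i w : nth_error (enum i) (code i w) = Some w.
Proof.
  exact (proj2_sig (constructive_indefinite_description _ (In_nth_error _ _ (in_enum i w)))).
Qed.

(* The variable [to_nat (i, m)] holds exactly at the threads through the [m]-th point of
   the [i]-th stage, so that every point of every stage has a name. *)
Definition names_valuation (n : nat) (x : W X) : Prop :=
  let (i, m) := of_nat n in nth_error (enum i) m = Some (lim_proj i x).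

Definition name i (w : W (F i)) : form Lam := Var Lam (to_nat (i, code i w)).

Lemma forces_name x i w : forces X names_valuation x (name i w) <-> lim_proj i x = w.
Proof.
  change (names_valuation (to_nat (i, code i w)) x <-> lim_proj i x = w).
  unfold names_valuation; rewrite cancel_of_to, code_spec.
  split; congruence.
Qed.

Lemma names_valuation_definable : definable_valuation names_valuation.
Proof.
  intro n; unfold names_valuation; destruct (of_nat n) as [i m].
  now exists i, (fun v => nth_error (enum i) m = Some v).
Qed.

Definition theory (x : W X) : form Lam -> Prop := fun a => forces X names_valuation x a.

Lemma theory_L x a : L a -> theory x a.
Proof.
  intro Ha. apply (definable_forces_KPlus Hsys (S := fun a => a = sigma)); auto.
  - now intros b -> i.
  - apply names_valuation_definable.
Qed.

Lemma theory_mcs x : maximal_consistent L (theory x).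
Proof.
  split.
  - intros [l [Hl HL]]. exact (proj1 (forces_impchain _ _ _ _ _) (theory_L x HL) Hl).
  - intros D HD Hsub a Da. apply NNPP; intro Hn. apply HD. exists [a; Neg a]; split.
    + intros b [<-|[<-|[]]]; auto.
    + apply kp_taut; intro v; simpl. now destruct (beval v a).
Qed.

Definition embed (x : W X) : W (canonical_frame L) := exist _ (theory x) (theory_mcs x).

Lemma embed_inj x y : embed x = embed y -> x = y.
Proof.
  intro E. apply (f_equal (@proj1_sig _ _)) in E; simpl in E.
  assert (Hxy : forall i, lim_proj i x = lim_proj i y).
  { intro i. assert (H : theory x (name i (lim_proj i x))) by now apply forces_name.
    rewrite E in H. symmetry; now apply forces_name in H. }
  apply eq_sig_hprop; [intros; apply proof_irrelevance|].
  apply functional_extensionality_dep, Hxy.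
Qed.

Section EmbedBack.
Variables (l : Lam) (x : W X) (Dw : W (canonical_frame L)).
Hypothesis HR : Rel (canonical_frame L) l (embed x) Dw.
Local Notation D := (proj1_sig Dw).

Lemma canonical_succ_witness a b : D a -> D b ->
  exists z, Rel X l x z /\ theory z a /\ theory z b.
Proof.
  intros Ha Hb. apply NNPP; intro Hno.
  assert (Hab : D (Imp a (Neg b))) by (apply HR; intros z Hz Hza Hzb; apply Hno; eauto).
  apply (mcs_not_bot (proj2_sig Dw)).
  exact (mcs_mp (proj2_sig Dw) _ _ (mcs_mp (proj2_sig Dw) _ _ Hab Ha) Hb).
Qed.

Lemma stage_named i : exists w, D (name i w).
Proof.
  assert (H : D (bigor (map (name i) (enum i)))).
  { apply HR; intros z _. apply forces_bigor with (name i (lim_proj i z)).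
    - apply in_map, in_enum.
    - now apply forces_name. }
  destruct (mcs_bigor (proj2_sig Dw) _ H) as [c [Hc Dc]].
  apply in_map_iff in Hc; destruct Hc as [w [<- _]]; eauto.
Qed.

Definition named_point i : W (F i) :=
  proj1_sig (constructive_indefinite_description _ (stage_named i)).

Lemma named_point_spec i : D (name i (named_point i)).
Proof. exact (proj2_sig (constructive_indefinite_description _ (stage_named i))). Qed.

Lemma named_point_thread j k : k <= j -> f j k (named_point j) = named_point k.
Proof.
  intro Hkj.
  destruct (canonical_succ_witness _ _ (named_point_spec j) (named_point_spec k))
    as [z [_ [Hj Hk]]].
  apply forces_name in Hj, Hk. now rewrite <- Hj, <- Hk, lim_proj_thread.
Qed.

Definition named_thread : W X := exist _ named_point named_point_thread.

Lemma named_thread_succ : Rel X l x named_thread.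
Proof.
  intro i.
  destruct (canonical_succ_witness _ _ (named_point_spec i) (named_point_spec i))
    as [z [Hz [Hi _]]].
  apply forces_name in Hi. simpl; rewrite <- Hi. apply Hz.
Qed.

Lemma named_thread_theory : embed named_thread = Dw.
Proof.
  assert (Hsub : forall a, D a -> theory named_thread a).
  { intros a Da.
    destruct (forces_definable Hsys names_valuation_definable a) as [i [Q HQ]].
    destruct (canonical_succ_witness _ _ (named_point_spec i) Da) as [z [_ [Hi Ha]]].
    apply forces_name in Hi. apply HQ; apply HQ in Ha. now rewrite Hi in Ha. }
  apply eq_sig_hprop; [intros; apply proof_irrelevance|]; simpl.
  apply functional_extensionality; intro a; apply propositional_extensionality.
  split; [|apply Hsub].
  apply (proj2 (proj2_sig Dw) _ (proj1 (theory_mcs named_thread)) Hsub).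
Qed.

End EmbedBack.

Lemma embed_bounded_morphism : bounded_morphism X (canonical_frame L) embed.
Proof.
  split.
  - intros l x y Hxy a Ha. exact (Ha y Hxy).
  - intros l x Dw HR. exists (named_thread HR).
    split; [apply named_thread_succ|apply named_thread_theory].
Qed.

End CanonicalEmbedding.

Lemma canonical_valid_inverse_limit Lam (F : nat -> frame Lam) f sigma :
  inverse_system F f -> (forall i, finite_frame (F i)) ->
  canonical sigma -> (forall i, valid (F i) sigma) -> valid (inverse_limit F f) sigma.
Proof.
  intros Hsys Hfin Hc Hsigma.
  exact (valid_injective_bounded_morphism (embed_bounded_morphism Hsys Hfin Hsigma)
           (@embed_inj _ _ _ Hsys Hfin _ Hsigma) Hc).
Qed.

Lemma KPlus_chain_union Lam (P : nat -> form Lam -> Prop) (S : form Lam -> Prop) :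
  (forall k k' a, k <= k' -> P k a -> P k' a) ->
  (forall k a, KPlus (P k) a -> P k a) ->
  (forall b, S b -> exists k, P k b) ->
  forall a, KPlus S a -> exists k, P k a.
Proof.
  intros Hmono Hnormal HS a Ha; induction Ha.
  - exists 0; now apply Hnormal, kp_taut.
  - exists 0; apply Hnormal, kp_K.
  - now apply HS.
  - destruct IHHa1 as [k1 H1], IHHa2 as [k2 H2]. exists (max k1 k2).
    apply Hnormal, kp_mp with a; apply kp_ax.
    + apply (Hmono k1); auto; lia.
    + apply (Hmono k2); auto; lia.
  - destruct IHHa as [k Hk]; exists k; now apply Hnormal, kp_nec, kp_ax.
  - destruct IHHa as [k Hk]; exists k; now apply Hnormal, kp_subst, kp_ax.
Qed.

Lemma list_uniform_bound A (P : nat -> A -> Prop) (Q : A -> Prop) :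
  (forall k k' a, k <= k' -> P k a -> P k' a) ->
  forall l, (forall a, In a l -> Q a -> exists k, P k a) ->
  exists k, forall a, In a l -> Q a -> P k a.
Proof.
  intros Hmono l; induction l as [|a l IH]; intros H.
  - exists 0; intros ? [].
  - destruct IH as [k Hk]; [intros; apply H; auto with datatypes|].
    destruct (classic (Q a)) as [Qa|Qa].
    + destruct (H a (or_introl eq_refl) Qa) as [ka Hka]. exists (max k ka).
      intros b [<-|Hb] Qb; [apply (Hmono ka)|apply (Hmono k)]; auto; lia.
    + exists k; intros b [<-|Hb] Qb; [contradiction|auto].
Qed.

Section DecreasingChain.
Variable Lam : Type.
Variable gamma : nat -> form Lam.
Hypothesis Hchain : forall i1 i2, i2 < i1 -> KPlus (fun a => a = gamma i1) (gamma i2).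

Lemma KPlus_gamma_mono m m' a :
  m <= m' -> KPlus (fun b => b = gamma m) a -> KPlus (fun b => b = gamma m') a.
Proof.
  intros Hle; apply KPlus_trans; intros b ->.
  destruct (le_lt_eq_dec _ _ Hle) as [Hlt| <-]; auto. now apply kp_ax.
Qed.

Lemma KPlus_gamma_compact a :
  KPlus (fun b => exists n, b = gamma n) a -> exists m, KPlus (fun b => b = gamma m) a.
Proof.
  intro Ha; refine (KPlus_chain_union (fun m => KPlus (fun b => b = gamma m)) _ _ _ Ha).
  - intros k k' b Hle; now apply KPlus_gamma_mono.
  - intros k; apply KPlus_trans; auto.
  - intros b [n ->]. exists n; now apply kp_ax.
Qed.

Lemma valid_gamma_mono (G : frame Lam) k k' : k <= k' -> valid G (gamma k') -> valid G (gamma k).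
Proof.
  intros Hle Hk'. apply (valid_KPlus (S := fun b => b = gamma k')); [now intros b ->|].
  apply (KPlus_gamma_mono Hle), kp_ax; reflexivity.
Qed.

Definition limit_entails (m k : nat) (a : form Lam) : Prop :=
  forall (F : nat -> frame Lam) (f : forall i j, W (F i) -> W (F j)),
    inverse_system F f -> (forall i, finite_frame (F i)) ->
    (forall i, valid (F i) (gamma k)) -> valid (inverse_limit F f) (gamma m) ->
    valid (inverse_limit F f) a.

Lemma limit_entails_mono m k k' a : k <= k' -> limit_entails m k a -> limit_entails m k' a.
Proof.
  intros Hle H F f Hsys Hfin Hk' Hm.
  apply H; auto. intro i; exact (valid_gamma_mono Hle (Hk' i)).
Qed.

Lemma limit_entails_KPlus m k a : KPlus (limit_entails m k) a -> limit_entails m k a.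
Proof.
  intros Ha F f Hsys Hfin Hk Hm. apply (valid_KPlus (S := limit_entails m k)); [|exact Ha].
  intros b Hb; now apply Hb.
Qed.

Lemma limit_entails_canonical m a :
  KPlus (fun b => exists n, b = gamma n) a -> canonical a -> exists k, limit_entails m k a.
Proof.
  intros Ha Hc. destruct (KPlus_gamma_compact Ha) as [k Hk].
  exists k; intros F f Hsys Hfin Hvk _.
  apply canonical_valid_inverse_limit; auto.
  intro i; apply (valid_KPlus (S := fun b => b = gamma k)); auto. now intros b ->.
Qed.

Lemma limit_entails_gamma m k a : KPlus (fun b => b = gamma m) a -> limit_entails m k a.
Proof.
  intros Ha F f _ _ _ Hm. apply (valid_KPlus (S := fun b => b = gamma m)); auto. now intros b ->.
Qed.

End DecreasingChain.

Theorem lemmal16 (Lam : Type) (gamma : nat -> form Lam) :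
  (forall i1 i2, i2 < i1 -> KPlus (fun a => a = gamma i1) (gamma i2)) ->
  (forall l, exists n, forall k,
     exists (F : nat -> frame Lam) (f : forall i j, W (F i) -> W (F j)),
       inverse_system F f /\
       (forall i, finite_frame (F i)) /\
       (forall i, valid (F i) (gamma k)) /\
       valid (inverse_limit F f) (gamma l) /\
       ~ valid (inverse_limit F f) (gamma n)) ->
  forall Sigma : form Lam -> Prop,
    (forall a, KPlus Sigma a <-> KPlus (fun b => exists n, b = gamma n) a) ->
    infinite_set (fun a => Sigma a /\ ~ canonical a).
Proof.
  intros Hchain Hlim Sigma HSigma [noncanonical Hnc].
  assert (HSigma_gamma : forall a, Sigma a -> KPlus (fun b => exists n, b = gamma n) a)
    by (intros a Ha; now apply HSigma, kp_ax).
  destruct (@list_uniform_bound _ (fun m => KPlus (fun b => b = gamma m))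
              (fun a => Sigma a /\ ~ canonical a) (KPlus_gamma_mono _ Hchain) noncanonical)
    as [m Hm].
  { intros a _ [Ha _]. exact (KPlus_gamma_compact _ Hchain (HSigma_gamma a Ha)). }
  destruct (Hlim m) as [n Hn].
  destruct (KPlus_chain_union (limit_entails gamma m) (S := Sigma)
              (limit_entails_mono Hchain (m := m)) (@limit_entails_KPlus _ _ m)) with (gamma n)
    as [k Hk].
  - intros b Hb. destruct (classic (canonical b)) as [Hc|Hc].
    + exact (limit_entails_canonical _ Hchain m (HSigma_gamma b Hb) Hc).
    + exists 0; apply limit_entails_gamma, Hm; auto.
  - apply HSigma, kp_ax; now exists n.
  - destruct (Hn k) as (F & f & Hsys & Hfin & Hk' & Hm' & Hn').
    exact (Hn' (Hk F f Hsys Hfin Hk' Hm')).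
Qed.
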